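(* Let $p$ be an odd prime. For every integer $0<s<p-1$ we have $b_{1,s}(\alpha)=b_{1,p-1-s}(\alpha)$ in $\mathbb F_p[\alpha]$.
   Context: $\mathbb F_p$ is the field of $p$ elements, $\alpha$ an indeterminate, $\binom{x}{m}=x(x-1)\cdots(x-m+1)/m!$. For integers $0<r,s<p$ (interpreted as elements of $\mathbb F_p$), $b_{r,s}(\alpha)=\sum_{k=0}^{p-1}(-r/s)^k\binom{r\alpha-1}{p-1-k}\binom{s\alpha-1}{k}\in\mathbb F_p[\alpha]$. *)

From mathcomp Require Import all_boot all_order all_algebra.
Set Implicit Arguments. Unset Strict Implicit. Unset Printing Implicit Defensive.
Import GRing.Theory.
Local Open Scope ring_scope.

(* Generalized binomial coefficient of a polynomial q over a field F:
   binom(q, m) = q (q-1) ... (q-m+1) / m!.  (Only used with m <= p-1 in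
   characteristic p, so m! is invertible.) *)
Definition poly_binom (F : fieldType) (q : {poly F}) (m : nat) : {poly F} :=
  (m`!%:R)^-1 *: \prod_(i < m) (q - (i%:R)%:P).

(* b_{r,s}(alpha) in F_p[alpha], with r, s read in F_p and alpha = 'X. *)
Definition b_poly (p r s : nat) : {poly 'F_p} :=
  \sum_(k < p)
    ((- ((r%:R : 'F_p) / (s%:R : 'F_p))) ^+ k) *:
      (poly_binom ((r%:R : 'F_p) *: 'X - 1) (p.-1 - k) *
       poly_binom ((s%:R : 'F_p) *: 'X - 1) k).

(* Both sides have degree < p, so it suffices that they agree at every c in F_p.
   At c = 0 both values are 1.  For c <> 0 pick representatives a, b, d in [1, p-1]
   of c, s c and (p-1-s) c, so that a + b + d is p or 2p.  At c the generalized
   binomials become ordinary ones, and b_{1,s}(c) is the coefficient of X^(p-1) in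
   (1 + xX)^(b-1) (1 + X)^(a-1) with x = -a/b.  Expanding 1 + xX = (1 - x) + x (1 + X),
   only one term reaches X^(p-1) (as C(k, p-1) = [k = p-1] mod p for k <= 2p-2); by the
   theorems of Wilson and Fermat its value is 0 if a + b + d = p, and
   w(a) w(b) w(d) with w(u) = (u-1)!/u^(u-1) if a + b + d = 2p.
   This is symmetric in b and d, i.e. under s <-> p-1-s. *)

From mathcomp Require Import all_boot all_order all_algebra all_field zify ring.
Set Implicit Arguments. Unset Strict Implicit. Unset Printing Implicit Defensive.
Import GRing.Theory.
Local Open Scope ring_scope.

Lemma natr_ffact (R : nzRingType) (n m : nat) :
  (n ^_ m)%:R = \prod_(i < m) (n%:R - i%:R) :> R.
Proof.
elim: m => [|m IHm]; first by rewrite ffactn0 big_ord0.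
rewrite ffactnSr big_ord_recr /= -IHm natrM.
have [le_mn | lt_nm] := leqP m n; first by rewrite natrB.
by rewrite ffact_small // !mul0r.
Qed.

Lemma coef_scaleXD1_exp (R : comNzRingType) (x : R) m j :
  ((x *: 'X + 1) ^+ m)`_j = x ^+ j *+ 'C(m, j).
Proof.
rewrite exprD1n.
under eq_bigr => i _ do rewrite exprZn scalerMnl.
rewrite coef_sumMXn (eq_bigl (fun i : 'I_m.+1 => val i == j)) //.
rewrite (big_ord1_eq _ (fun i => x ^+ i *+ 'C(m, i))).
by case: ltnP => // lt_mj; rewrite bin_small.
Qed.

Lemma coef_scaleXD1_exp_mul (R : comNzRingType) (x : R) m n N :
  ((x *: 'X + 1) ^+ m * ('X + 1) ^+ n)`_N =
  \sum_(i < m.+1) ((1 - x) ^+ (m - i) * x ^+ i) *+ 'C(m, i) *+ 'C(n + i, N).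
Proof.
have -> : x *: 'X + 1 = (1 - x)%:P + x *: ('X + 1) :> {poly R}.
  by rewrite scalerDr alg_polyC polyCB polyC1 addrCA subrK.
rewrite exprDn mulr_suml coef_sum; apply: eq_bigr => i _.
rewrite -polyC_exp exprZn mul_polyC scalerA scalerMnl -scalerAl coefZ -exprD addnC.
have := coef_scaleXD1_exp (1 : R) (n + i) N; rewrite scale1r expr1n => ->.
by rewrite mulr_natr.
Qed.

Lemma eq_poly_finField (F : finFieldType) (q r : {poly F}) :
  (size q <= #|F|)%N -> (size r <= #|F|)%N -> (forall c, q.[c] = r.[c]) -> q = r.
Proof.
move=> szq szr qr; apply/eqP; rewrite -subr_eq0; apply: contraT => nz_qr.
have roots_qr : all (root (q - r)) (enum F).
  by apply/allP => c _; rewrite rootE hornerD hornerN qr subrr.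
have := max_poly_roots nz_qr roots_qr (enum_uniq F).
by rewrite -cardE ltnNge (leq_trans (size_polyD _ _)) // size_polyN geq_max szq.
Qed.

Section PrimeCharacteristic.

Variables (F : fieldType) (p : nat).
Hypothesis pcharFp : p \in [pchar F].

Let p_pr : prime p := pcharf_prime pcharFp.
Let p_gt1 : (1 < p)%N := prime_gt1 p_pr.

Lemma natr_pchar_eq0 k : ((k%:R : F) == 0) = (p %| k)%N.
Proof. by rewrite (dvdn_pcharf pcharFp). Qed.

Lemma natr_pchar_neq0 k : (0 < k < p)%N -> (k%:R : F) != 0.
Proof. by case/andP=> k_gt0 lt_kp; rewrite natr_pchar_eq0 gtnNdvd. Qed.

Lemma fact_pchar_neq0 k : (k < p)%N -> (k`!%:R : F) != 0.
Proof.
elim: k => [|k IHk] lt_kp; first by rewrite fact0 oner_neq0.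
by rewrite factS natrM mulf_neq0 ?IHk ?(ltnW lt_kp) // natr_pchar_neq0.
Qed.

(* Wilson's theorem is the case k = 0. *)
Lemma fact_reflect_pchar k : (k < p)%N -> ((p.-1 - k)`! * k`!)%:R = (-1) ^+ k.+1 :> F.
Proof.
elim: k => [|k IHk] lt_kp.
  apply/eqP; rewrite subn0 muln1 expr1 -addr_eq0 natr1 natr_pchar_eq0.
  by rewrite -(Wilson p_gt1) p_pr.
have e : (p.-1 - k = (p.-1 - k.+1).+1)%N by lia.
have eN : ((p.-1 - k)%:R : F) = - k.+1%:R.
  apply/eqP; rewrite -addr_eq0 -natrD natr_pchar_eq0.
  by have -> : (p.-1 - k + k.+1 = p)%N by lia.
rewrite e factS -e !natrM eN in IHk; rewrite factS !natrM exprS -IHk ?(ltnW lt_kp) //.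
ring.
Qed.

Lemma bin_pred_pchar k : (k <= (p.-1).*2)%N -> ('C(k, p.-1)%:R : F) = (k == p.-1)%:R.
Proof.
move=> le_k.
have [lt_k | gt_k | ->] := ltngtP k p.-1; [by rewrite bin_small | | by rewrite binn].
have /(congr1 (fun n => n%:R : F)) := bin_fact (ltnW gt_k).
have /eqP -> : (k`!%:R : F) == 0 by rewrite natr_pchar_eq0 dvdn_fact //; lia.
move/eqP; rewrite !natrM !mulf_eq0 !(negPf (fact_pchar_neq0 _)) ?orbF; try lia.
by move/eqP.
Qed.

Lemma horner_poly_binom_nat (q : {poly F}) (c : F) n m :
  (m < p)%N -> q.[c] = n%:R -> (poly_binom q m).[c] = 'C(n, m)%:R.
Proof.
move=> lt_mp qc; rewrite /poly_binom hornerZ horner_prod.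
under eq_bigr => i _ do rewrite hornerD hornerN hornerC qc.
by rewrite -natr_ffact -bin_ffact natrM mulrC mulfK ?fact_pchar_neq0.
Qed.

Lemma coef_pred_scaleXD1_exp_mul (x : F) n m : (n < p)%N -> (m < p)%N ->
  ((x *: 'X + 1) ^+ m * ('X + 1) ^+ n)`_p.-1 =
  if (p.-1 - n <= m)%N
  then ((1 - x) ^+ (m - (p.-1 - n)) * x ^+ (p.-1 - n)) *+ 'C(m, p.-1 - n) else 0.
Proof.
move=> lt_np lt_mp; rewrite coef_scaleXD1_exp_mul.
set G := fun i => ((1 - x) ^+ (m - i) * x ^+ i) *+ 'C(m, i).
rewrite (eq_bigr (fun i : 'I_m.+1 => if (i == p.-1 - n :> nat)%N then G i else 0)); last first.
  move=> i _; rewrite -mulr_natr bin_pred_pchar; last by have := ltn_ord i; lia.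
  by rewrite mulr_natr mulrb; congr (if _ then _ else _); apply/eqP/eqP; lia.
by rewrite -big_mkcond (big_ord1_eq _ G).
Qed.

Lemma expr_pred_pchar (x : F) : x ^+ p = x -> x != 0 -> x ^+ p.-1 = 1.
Proof.
by move=> xp nz_x; apply: (mulIf nz_x); rewrite mul1r -exprSr prednK ?prime_gt0.
Qed.

Lemma expr_pred_subn (x : F) k :
  x ^+ p = x -> x != 0 -> (k <= p.-1)%N -> x ^+ (p.-1 - k) = x^-1 ^+ k.
Proof.
move=> xp nz_x le_k; apply: (mulIf (expf_neq0 k nz_x)).
by rewrite -exprD subnK // expr_pred_pchar // exprVn mulVf // expf_neq0.
Qed.

Lemma expr_natr_pchar k : (k%:R : F) ^+ p = k%:R.
Proof. by rewrite -(pFrobenius_autE pcharFp) rmorph_nat. Qed.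

Lemma expr_ratio_pchar a b : (- (a%:R / b%:R) : F) ^+ p = - (a%:R / b%:R).
Proof.
rewrite -(pFrobenius_autE pcharFp) rmorphN fmorph_div.
by rewrite !rmorph_nat.
Qed.

Lemma bin_reflect_pchar m u v : (u < p)%N -> (v < p)%N -> (p.-1 - u + (p.-1 - v) = m)%N ->
  'C(m, p.-1 - u)%:R * (-1) ^+ (u + v) = (m`! * u`! * v`!)%:R :> F.
Proof.
move=> lt_up lt_vp def_m.
have -> : (-1) ^+ (u + v) = (-1) ^+ u.+1 * (-1) ^+ v.+1 :> F by rewrite exprD !exprS; ring.
rewrite mulrA -(fact_reflect_pchar lt_up) -(fact_reflect_pchar lt_vp) -!natrM.
rewrite -(bin_fact (_ : p.-1 - u <= m)%N); last by lia.
by rewrite (_ : m - (p.-1 - u) = p.-1 - v)%N; [congr (_%:R); ring | lia].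
Qed.

(* [fact_weight n] is the weight w(n+1) of the sketch above. *)
Definition fact_weight (n : nat) : F := n`!%:R / n.+1%:R ^+ n.

Lemma coef_pred_weights n m l :
    (n < p.-1)%N -> (m < p.-1)%N -> (l < p.-1)%N -> (n.+1 + m.+1 + l.+1 = p.*2)%N ->
  (((- (n.+1%:R / m.+1%:R)) *: 'X + 1) ^+ m * ('X + 1) ^+ n)`_p.-1 =
  fact_weight n * fact_weight m * fact_weight l.
Proof.
move=> lt_n lt_m lt_l sum_nml.
rewrite coef_pred_scaleXD1_exp_mul ?ifT; try lia.
have nzN : (n.+1%:R : F) != 0 by apply: natr_pchar_neq0; lia.
have nzM : (m.+1%:R : F) != 0 by apply: natr_pchar_neq0; lia.
have nzL : (l.+1%:R : F) != 0 by apply: natr_pchar_neq0; lia.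
have sumNML : (l.+1%:R : F) = - (n.+1%:R + m.+1%:R).
  apply/eqP; rewrite -addr_eq0 -!natrD natr_pchar_eq0 addnC sum_nml -muln2.
  exact: dvdn_mulr.
have binC : 'C(m, p.-1 - n)%:R * (-1) ^+ (n + l.+1) = (m`! * n`! * l.+1`!)%:R :> F.
  by apply: bin_reflect_pchar; lia.
have fermatM : (m.+1%:R : F) ^+ l.+1 * m.+1%:R ^+ n * m.+1%:R ^+ m = 1.
  rewrite -!exprD (_ : l.+1 + n + m = p.-1 + p.-1)%N; last by lia.
  by rewrite exprD expr_pred_pchar ?mulr1 ?expr_natr_pchar.
have -> : 1 - - (n.+1%:R / m.+1%:R) = - (l.+1%:R / m.+1%:R) :> F.
  by rewrite sumNML; field; rewrite addrC natr1.
rewrite (_ : m - (p.-1 - n) = p.-1 - l.+1)%N; last by lia.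
rewrite !expr_pred_subn ?expr_ratio_pchar ?oppr_eq0 ?mulf_neq0 ?invr_eq0 //; try lia.
rewrite -mulr_natr /fact_weight; rewrite factS !natrM in binC.
(* Abstracted, so that [field] does not unfold n.+1%:R into 1 + n%:R. *)
move: (n.+1%:R : F) (m.+1%:R : F) (l.+1%:R : F) nzN nzM nzL binC fermatM.
move=> N M L nzN nzM nzL binC fermatM.
have nzMlMn : M ^+ l.+1 * M ^+ n != 0 by rewrite mulf_neq0 ?expf_neq0.
have -> : M ^+ m = (M ^+ l.+1 * M ^+ n)^-1.
  by rewrite -[RHS]mulr1 -fermatM mulrA mulVf ?mul1r.
have -> : 'C(m, p.-1 - n)%:R = m`!%:R * n`!%:R * (L * l`!%:R) / (-1) ^+ (n + l.+1).
  by rewrite -binC mulfK ?signr_eq0.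
rewrite !invrN (invf_div L M) (invf_div N M) (exprNn (M / L)) (exprNn (M / N)).
rewrite !expr_div_n exprD !exprS.
by field; rewrite !expf_neq0 ?oppr_eq0 ?oner_eq0 ?nzM ?nzL ?nzN.
Qed.

Lemma coef_pred_closed n m l :
    (n < p.-1)%N -> (m < p.-1)%N -> (l < p.-1)%N -> (p %| n.+1 + m.+1 + l.+1)%N ->
  (((- (n.+1%:R / m.+1%:R)) *: 'X + 1) ^+ m * ('X + 1) ^+ n)`_p.-1 =
  if (n.+1 + m.+1 + l.+1 == p)%N then 0 else fact_weight n * fact_weight m * fact_weight l.
Proof.
move=> lt_n lt_m lt_l /dvdnP [k def_k].
have [k1 | k2] : k = 1%N \/ k = 2%N by nia.
  have -> : (n.+1 + m.+1 + l.+1 == p)%N by apply/eqP; lia.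
  by rewrite coef_pred_scaleXD1_exp_mul ?ifF //; lia.
have -> : (n.+1 + m.+1 + l.+1 == p)%N = false by apply/eqP; lia.
by rewrite (coef_pred_weights lt_n lt_m lt_l) //; lia.
Qed.

End PrimeCharacteristic.

Lemma size_poly_binom (F : fieldType) (q : {poly F}) m :
  (size q <= 2)%N -> (size (poly_binom q m) <= m.+1)%N.
Proof.
move=> size_q; apply: leq_trans (size_scale_leq _ _) _.
elim: m => [|m IHm]; first by rewrite big_ord0 size_poly1.
rewrite big_ord_recr /=; apply: leq_trans (size_polyMleq _ _) _.
have : (size (q - (m%:R)%:P)%R <= 2)%N.
  by rewrite (leq_trans (size_polyD _ _)) // size_polyN geq_max size_q (leq_trans (size_polyC_leq1 _)).
move: (size _) (size _) IHm => a b; lia.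
Qed.

Lemma size_b_poly p r s : (size (b_poly p r s) <= p)%N.
Proof.
have size_lin (a : 'F_p) : (size (a *: 'X - 1 : {poly 'F_p})%R <= 2)%N.
  rewrite (leq_trans (size_polyD _ _)) // size_polyN size_poly1 geq_max andbT.
  by rewrite (leq_trans (size_scale_leq _ _)) // size_polyX.
rewrite /b_poly; apply: (big_ind (fun q : {poly 'F_p} => size q <= p)%N).
- by rewrite size_poly0.
- by move=> q q' size_q size_q'; rewrite (leq_trans (size_polyD _ _)) // geq_max size_q.
move=> k _; rewrite (leq_trans (size_scale_leq _ _)) // (leq_trans (size_polyMleq _ _)) //.
have := size_poly_binom (p.-1 - k) (size_lin r%:R).
have := size_poly_binom k (size_lin s%:R).
move: (size (poly_binom _ (p.-1 - k))) (size (poly_binom _ k)) (ltn_ord k) => a b; lia.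
Qed.

Section EvaluationOverFp.

Variables (p : nat) (p_pr : prime p).

Let pcharFp : p \in [pchar 'F_p] := pchar_Fp p_pr.

Lemma expr_Fp_p (u : 'F_p) : u ^+ p = u.
Proof. by have := expf_card u; rewrite card_Fp. Qed.

Lemma Fp_natr_succ (u : 'F_p) : u != 0 -> exists2 n, (n < p.-1)%N & n.+1%:R = u.
Proof.
move=> nz_u; have lt_up : (u < p)%N by rewrite -[X in (_ < X)%N](Fp_cast p_pr) ltn_ord.
have u_gt0 : (0 < u)%N.
  by rewrite lt0n; apply: contra nz_u => /eqP u0; rewrite -[u]natr_Zp u0.
by exists u.-1; [lia | rewrite prednK ?natr_Zp].
Qed.

Lemma horner_b_poly s n m (c : 'F_p) : (n < p)%N -> (m < p)%N ->
    n.+1%:R = c -> m.+1%:R = s%:R * c ->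
  (b_poly p 1 s).[c] = (((- (1%:R / s%:R)) *: 'X + 1) ^+ m * ('X + 1) ^+ n)`_p.-1.
Proof.
move=> lt_np lt_mp nc mc.
have eval_n : ((1%:R : 'F_p) *: 'X - 1).[c] = n%:R.
  by rewrite hornerD hornerN hornerZ hornerX hornerC mul1r -nc mulrSr addrK.
have eval_m : ((s%:R : 'F_p) *: 'X - 1).[c] = m%:R.
  by rewrite hornerD hornerN hornerZ hornerX hornerC -mc mulrSr addrK.
rewrite /b_poly horner_sum coefM prednK ?prime_gt0 //.
apply: eq_bigr => k _.
have lt_k : (p.-1 - k < p)%N by have := ltn_ord k; lia.
rewrite hornerZ hornerM coef_scaleXD1_exp.
rewrite !(horner_poly_binom_nat pcharFp _ eval_n, horner_poly_binom_nat pcharFp _ eval_m) //.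
have := coef_scaleXD1_exp (1 : 'F_p) n (p.-1 - k); rewrite scale1r expr1n => ->.
by rewrite mulrA mulrAC [_ * 'C(m, k)%:R]mulr_natr.
Qed.

Lemma horner_b_poly0 s : (0 < s)%N -> (s.+1 < p)%N -> (b_poly p 1 s).[0] = 1.
Proof.
move=> s_gt0 lt_sp; have p_gt0 := prime_gt0 p_pr.
have p0 : (p.-1.+1%:R : 'F_p) = 0 by rewrite prednK // pchar_Fp_0.
rewrite (horner_b_poly (n := p.-1) (m := p.-1)) ?p0 ?mulr0 ?ltn_predL //.
rewrite coef_pred_scaleXD1_exp_mul ?ltn_predL // subnn subn0 expr0 mulr1 bin0 mulr1n.
apply: (expr_pred_pchar pcharFp); first exact: expr_Fp_p.
have nz_s : (s%:R : 'F_p) != 0 by apply: (natr_pchar_neq0 pcharFp); lia.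
have nz_s1 : (s.+1%:R : 'F_p) != 0 by apply: (natr_pchar_neq0 pcharFp); lia.
have -> : 1 - - (1%:R / s%:R) = s.+1%:R / s%:R :> 'F_p by rewrite -natr1; field.
by rewrite mulf_neq0 ?invr_eq0.
Qed.

Lemma horner_b_poly_sym s (c : 'F_p) : (0 < s)%N -> (s < p.-1)%N ->
  (b_poly p 1 s).[c] = (b_poly p 1 (p.-1 - s)).[c].
Proof.
move=> s_gt0 lt_s; set t := (p.-1 - s)%N.
have [-> | nz_c] := eqVneq c 0; first by rewrite !horner_b_poly0 //; lia.
have nz_s : (s%:R : 'F_p) != 0 by apply: (natr_pchar_neq0 pcharFp); lia.
have nz_t : (t%:R : 'F_p) != 0 by apply: (natr_pchar_neq0 pcharFp); lia.
have [n lt_n nc] := Fp_natr_succ nz_c.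
have [m lt_m mc] := Fp_natr_succ (mulf_neq0 nz_s nz_c).
have [l lt_l lc] := Fp_natr_succ (mulf_neq0 nz_t nz_c).
have dvd_nml : (p %| n.+1 + m.+1 + l.+1)%N.
  rewrite -(natr_pchar_eq0 pcharFp) !natrD nc mc lc (_ : c + _ + _ = (s + t).+1%:R * c); last first.
    by rewrite mulrSr natrD; ring.
  by rewrite (_ : (s + t).+1 = p)%N ?pchar_Fp_0 ?mul0r //; lia.
have lt_np := leq_trans lt_n (leq_pred p).
rewrite (horner_b_poly lt_np (leq_trans lt_m (leq_pred p)) nc mc).
rewrite (horner_b_poly lt_np (leq_trans lt_l (leq_pred p)) nc lc).
have -> : 1%:R / s%:R = n.+1%:R / m.+1%:R :> 'F_p by rewrite nc mc; field; rewrite nz_c.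
have -> : 1%:R / t%:R = n.+1%:R / l.+1%:R :> 'F_p by rewrite nc lc; field; rewrite nz_c.
rewrite (coef_pred_closed pcharFp lt_n lt_m lt_l dvd_nml).
rewrite (coef_pred_closed pcharFp lt_n lt_l lt_m); last by rewrite (addnAC n.+1 l.+1 m.+1).
by rewrite (addnAC n.+1 l.+1 m.+1) mulrAC.
Qed.

End EvaluationOverFp.

Theorem corollary14 (p : nat) (hp : prime p) (hodd : odd p) (s : nat)
  (hs0 : (0 < s)%N) (hs1 : (s < p.-1)%N) :
  b_poly p 1 s = b_poly p 1 (p.-1 - s).
Proof.
apply: eq_poly_finField; rewrite ?card_Fp ?size_b_poly // => c.
exact: horner_b_poly_sym.
Qed.
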